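(* Assume $a_j\neq0$ for $1\le j\le4$, $v_{12}^2+a_2a_4\neq0$ and $v_{22}^2+a_3a_4\neq0$. Then: (i) $V(\mathbf v,d)\cap H_0$ consists of three distinct points $[0,1,0]$, $[0,r_1,R_1]$, $[0,r_2,R_2]$, where $r_j\neq0$, $R_j\neq0$ and $a_4R_j^2-2v_{12}r_jR_j-a_2r_j^2=0$ for $j=1,2$; (ii) $V(\mathbf v,d)\cap H_1$ consists of three distinct points $[1,0,0]$, $[s_1,0,S_1]$, $[s_2,0,S_2]$, where $s_j\neq0$, $S_j\neq0$ and $a_4S_j^2+2v_{22}s_jS_j-a_3s_j^2=0$ for $j=1,2$; (iii) $V(\mathbf v,d)\cap H_2$ consists only of the two points $[1,0,0]$, $[0,1,0]$; (iv) the four points $[0,r_j,R_j]$, $[s_j,0,S_j]$ ($j=1,2$) are smooth points of $V(\mathbf v,d)$.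
   Context: Parameters $[\mathbf v,d]=[v_{11},v_{12},v_{21},v_{22},d]\in\mathbb{C}P^4$ (complex, not all zero); $a_1=v_{11}-v_{21}-d$, $a_2=-v_{11}-v_{21}+d$, $a_3=v_{11}+v_{21}+d$, $a_4=-v_{11}+v_{21}-d$. On $\mathbb{C}P^2$ with coordinates $[u_0,u_1,u_2]$, $V(\mathbf v,d)$ is the curve $P=0$ where $P=a_4u_2^4+2(v_{22}u_0-v_{12}u_1)u_2^3-(a_3u_0^2+a_2u_1^2)u_2^2+2u_0u_1(v_{22}u_1-v_{12}u_0)u_2+a_1u_0^2u_1^2$, and $H_j=\{[u_0,u_1,u_2]:u_j=0\}$ are the coordinate lines. A point of $V$ is smooth if not all partial derivatives of $P$ vanish there. *)

From HB Require Import structures.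
From mathcomp Require Import all_boot all_order all_algebra.
From mathcomp Require Import mpoly.
From mathcomp Require Import complex.
From mathcomp Require Import reals.

Set Implicit Arguments.
Unset Strict Implicit.
Unset Printing Implicit Defensive.

Import Order.TTheory GRing.Theory Num.Theory.
Local Open Scope ring_scope.

Definition i0 : 'I_3 := @Ordinal 3 0 isT.
Definition i1 : 'I_3 := @Ordinal 3 1 isT.
Definition i2 : 'I_3 := @Ordinal 3 2 isT.

Section Curve.
Variable R : realType.
Local Notation C := (R[i]).

Definition a1 (v11 v12 v21 v22 d : C) : C := v11 - v21 - d.
Definition a2 (v11 v12 v21 v22 d : C) : C := - v11 - v21 + d.
Definition a3 (v11 v12 v21 v22 d : C) : C := v11 + v21 + d.
Definition a4 (v11 v12 v21 v22 d : C) : C := - v11 + v21 - d.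

Local Notation u0 := ('X_i0 : {mpoly C[3]}).
Local Notation u1 := ('X_i1 : {mpoly C[3]}).
Local Notation u2 := ('X_i2 : {mpoly C[3]}).

Definition Ppoly (v11 v12 v21 v22 d : C) : {mpoly C[3]} :=
  let A1 := a1 v11 v12 v21 v22 d in
  let A2 := a2 v11 v12 v21 v22 d in
  let A3 := a3 v11 v12 v21 v22 d in
  let A4 := a4 v11 v12 v21 v22 d in
  A4 *: u2 ^+ 4
  + 2%:R *: ((v22 *: u0 - v12 *: u1) * u2 ^+ 3)
  - (A3 *: u0 ^+ 2 + A2 *: u1 ^+ 2) * u2 ^+ 2
  + 2%:R *: (u0 * u1 * (v22 *: u1 - v12 *: u0) * u2)
  + A1 *: (u0 ^+ 2 * u1 ^+ 2).

Definition pt (x y z : C) : 'I_3 -> C :=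
  fun j => if val j == 0%N then x else if val j == 1%N then y else z.

(* a triple represents a point of CP^2 *)
Definition nonzero3 (x : 'I_3 -> C) : Prop := exists j, x j != 0.

(* equality of points of CP^2 : proportional nonzero triples *)
Definition proj_eq (x y : 'I_3 -> C) : Prop :=
  exists2 c : C, c != 0 & forall j, y j = c * x j.

Definition onV (v11 v12 v21 v22 d : C) (x : 'I_3 -> C) : Prop :=
  (Ppoly v11 v12 v21 v22 d).@[x] = 0.

Definition smooth_pt (v11 v12 v21 v22 d : C) (x : 'I_3 -> C) : Prop :=
  exists j : 'I_3, (mderiv j (Ppoly v11 v12 v21 v22 d)).@[x] != 0.

End Curve.

(* On each coordinate line the quartic P restricts to something elementary:
   u2^2 (A4 u2^2 - 2 v12 u1 u2 - A2 u1^2) on u0 = 0,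
   u2^2 (A4 u2^2 + 2 v22 u0 u2 - A3 u0^2) on u1 = 0, and A1 u0^2 u1^2 on u2 = 0.
   The discriminant hypotheses split each binary quadratic into two distinct
   linear factors u2 - r u_j, and A2 A3 <> 0 makes the roots r nonzero; this gives
   the three intersection points.  At such a simple nonzero root the
   u2-derivative of u2^2 q is r^2 q'(r) <> 0, so these points are smooth. *)

From HB Require Import structures.
From mathcomp Require Import all_boot all_order all_algebra.
From mathcomp Require Import mpoly.
From mathcomp Require Import complex.
From mathcomp Require Import reals.
From mathcomp Require Import ring.

Set Implicit Arguments.
Unset Strict Implicit.
Unset Printing Implicit Defensive.

Import Order.TTheory GRing.Theory Num.Theory.
Local Open Scope ring_scope.

Section Vieta.
Variable F : idomainType.
Implicit Types a w b r y z : F.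

Lemma vieta_factor a w b r (r' : F) y z :
  a * (r + r') = 2 * w -> a * (r * r') = - b ->
  a * z ^+ 2 - 2 * w * y * z - b * y ^+ 2 = a * ((z - r * y) * (z - r' * y)).
Proof. by move=> hsum hprod; rewrite -hsum -[b]opprK -hprod; ring. Qed.

Lemma vieta_roots a w b r (r' : F) :
  a * (r + r') = 2 * w -> a * (r * r') = - b ->
  a * r ^+ 2 - 2 * w * r - b = 0 /\ a * r' ^+ 2 - 2 * w * r' - b = 0.
Proof. by move=> hsum hprod; rewrite -hsum -[b]opprK -hprod; split; ring. Qed.

(* [4 a r^3 - 6 w r^2 - 2 b r] is the derivative of [z^2 (a z^2 - 2 w z - b)] at [r]. *)
Lemma vieta_quartic_deriv_neq0 a w b r (r' : F) :
  a != 0 -> r != 0 -> r' != 0 -> r != r' ->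
  a * (r + r') = 2 * w -> a * (r * r') = - b ->
  4 * a * r ^+ 3 - 6 * w * r ^+ 2 - 2 * b * r != 0 /\
  4 * a * r' ^+ 3 - 6 * w * r' ^+ 2 - 2 * b * r' != 0.
Proof.
move=> a0 r0 r'0 rr' hsum hprod.
have bE : b = - (a * (r * r')) by rewrite hprod opprK.
have -> : 6 * w = 3 * (2 * w) by ring.
rewrite -hsum bE.
have -> : 4 * a * r ^+ 3 - 3 * (a * (r + r')) * r ^+ 2 - 2 * (- (a * (r * r'))) * r
  = a * r ^+ 2 * (r - r') by ring.
have -> : 4 * a * r' ^+ 3 - 3 * (a * (r + r')) * r' ^+ 2 - 2 * (- (a * (r * r'))) * r'
  = a * r' ^+ 2 * (r' - r) by ring.
by rewrite !mulf_neq0 ?expf_neq0 // subr_eq0 // eq_sym.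
Qed.

Lemma binary_quartic_eq0 r (r' : F) y z : y != 0 \/ z != 0 ->
  z ^+ 2 * ((z - r * y) * (z - r' * y)) = 0 ->
  [\/ y != 0 /\ z = 0 * y, y != 0 /\ z = r * y | y != 0 /\ z = r' * y].
Proof.
move=> yz.
have y_neq0 c : z = c * y -> y != 0.
  by move=> zE; case: yz => //; apply: contraNneq => y0; rewrite zE y0 mulr0.
move/eqP; rewrite mulf_eq0 expf_eq0 /= mulf_eq0 !subr_eq0 => /or3P[] /eqP zE.
- by apply: Or31; rewrite zE mul0r; split=> //; apply: (y_neq0 0); rewrite mul0r.
- by apply: Or32; split=> //; apply: y_neq0 zE.
- by apply: Or33; split=> //; apply: y_neq0 zE.
Qed.

End Vieta.

Lemma quadratic_vieta (F : numClosedFieldType) (a w b : F) :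
  a != 0 -> b != 0 -> w ^+ 2 + b * a != 0 ->
  exists r r', [/\ r != 0, r' != 0, r != r', a * (r + r') = 2 * w & a * (r * r') = - b].
Proof.
move=> a0 b0 disc0.
pose delta := sqrtC (w ^+ 2 + b * a).
have delta2 : delta ^+ 2 = w ^+ 2 + b * a by rewrite sqrtCK.
have delta0 : delta != 0 by apply: contraNneq disc0 => d0; rewrite -delta2 d0 expr0n.
exists ((w + delta) / a), ((w - delta) / a).
have hprod : a * ((w + delta) / a * ((w - delta) / a)) = - b.
  have -> : a * ((w + delta) / a * ((w - delta) / a)) = (w ^+ 2 - delta ^+ 2) / a.
    by field.
  by rewrite delta2; field.
have : a * ((w + delta) / a * ((w - delta) / a)) != 0 by rewrite hprod oppr_eq0.
rewrite !mulf_eq0 !negb_or => /and3P[_ -> ->].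
split=> //; last by field.
have root_gap : (w + delta) / a - (w - delta) / a = 2 * delta / a by field.
by rewrite -subr_eq0 root_gap !mulf_neq0 ?invr_eq0 ?pnatr_eq0.
Qed.

(* [Ppoly] is [quartic] at the variables.  Values are computed through an abstract
   morphism (resp. derivation) because rewriting [mevalZ] inside the concrete
   [Ppoly] is impractically slow. *)
Section QuarticForm.
Variables (K : comNzRingType) (T : lalgType K) (b1 b2 b3 b4 w1 w2 : K).

Definition quartic (u0 u1 u2 : T) : T :=
  b4 *: u2 ^+ 4
  + 2%:R *: ((w2 *: u0 - w1 *: u1) * u2 ^+ 3)
  - (b3 *: u0 ^+ 2 + b2 *: u1 ^+ 2) * u2 ^+ 2
  + 2%:R *: (u0 * u1 * (w2 *: u1 - w1 *: u0) * u2)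
  + b1 *: (u0 ^+ 2 * u1 ^+ 2).

Variable f : T -> K.
Hypotheses (fD : {morph f : p q / p + q}) (fN : {morph f : p / - p})
  (fM : {morph f : p q / p * q}) (fZ : forall c p, f (c *: p) = c * f p).

Lemma morph_exp p k : f (p ^+ k.+1) = f p ^+ k.+1.
Proof. by elim: k => [|k IHk]; rewrite ?expr1 // exprS fM IHk -exprS. Qed.

Lemma morph_quartic u0 u1 u2 : f (quartic u0 u1 u2) =
  let x := f u0 in let y := f u1 in let z := f u2 in
  b4 * z ^+ 4 + 2 * (w2 * x - w1 * y) * z ^+ 3 - (b3 * x ^+ 2 + b2 * y ^+ 2) * z ^+ 2
  + 2 * x * y * (w2 * y - w1 * x) * z + b1 * x ^+ 2 * y ^+ 2.
Proof. by rewrite /quartic !(fD, fN, fZ, fM, morph_exp) /=; ring. Qed.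

Variable D : T -> T.
Hypotheses (DD : {morph D : p q / p + q}) (DN : {morph D : p / - p})
  (DM : forall p q, D (p * q) = D p * q + p * D q) (DZ : forall c p, D (c *: p) = c *: D p).

Lemma morph_deriv_quartic u0 u1 u2 : f (D u0) = 0 -> f (D u1) = 0 -> f (D u2) = 1 ->
  f (D (quartic u0 u1 u2)) =
  let x := f u0 in let y := f u1 in let z := f u2 in
  4 * b4 * z ^+ 3 + 6 * (w2 * x - w1 * y) * z ^+ 2 - 2 * (b3 * x ^+ 2 + b2 * y ^+ 2) * z
  + 2 * x * y * (w2 * y - w1 * x).
Proof.
move=> D0 D1 D2; rewrite /quartic !exprS !expr0 !mulr1.
by rewrite !(DD, DN, DZ, DM) !(fD, fN, fZ, fM) D0 D1 D2 /=; ring.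
Qed.

End QuarticForm.

Lemma meval_mderivXU (F : comNzRingType) n (v : 'I_n -> F) (i j : 'I_n) :
  ('X_i : {mpoly F[n]})^`M(j).@[v] = (i == j)%:R.
Proof.
rewrite mderivX mevalZ mevalX mnm1E.
case: eqP => [->|_]; last by rewrite mul0r.
by rewrite mul1r big1 // => k _; rewrite mnmBE !mnm1E subnn expr0.
Qed.

Section ProjectivePlane.
Variable R : realType.
Local Notation C := R[i].
Implicit Types (x : 'I_3 -> C) (a b c e : C).

Lemma ord3P (j : 'I_3) : [\/ j = i0, j = i1 | j = i2].
Proof. by case: j => -[|[|[|//]]] lt_j; [apply: Or31|apply: Or32|apply: Or33]; apply: val_inj. Qed.

Lemma nonzero3P x : nonzero3 x <-> [\/ x i0 != 0, x i1 != 0 | x i2 != 0].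
Proof.
split; first by case=> j; case: (ord3P j) => -> nz; [apply: Or31|apply: Or32|apply: Or33].
by case=> nz; [exists i0|exists i1|exists i2].
Qed.

Lemma proj_eq_ptP a b c x : proj_eq (pt a b c) x <->
  exists2 k, k != 0 & [/\ x i0 = k * a, x i1 = k * b & x i2 = k * c].
Proof.
split; first by case=> k k0 xE; exists k; rewrite ?xE.
by case=> k k0 [x0 x1 x2]; exists k => // j; case: (ord3P j) => ->.
Qed.

Lemma proj_eq_pt01 c x :
  proj_eq (pt 0 1 c) x <-> [/\ x i0 = 0, x i1 != 0 & x i2 = c * x i1].
Proof.
rewrite proj_eq_ptP; split=> [[k k0 [-> -> ->]]|[x0 x1 x2]].
  by rewrite mulr0 mulr1 mulrC.
by exists (x i1) => //; rewrite x0 x2 mulr0 mulr1 mulrC.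
Qed.

Lemma proj_eq_pt10 c x :
  proj_eq (pt 1 0 c) x <-> [/\ x i1 = 0, x i0 != 0 & x i2 = c * x i0].
Proof.
rewrite proj_eq_ptP; split=> [[k k0 [-> -> ->]]|[x1 x0 x2]].
  by rewrite mulr0 mulr1 mulrC.
by exists (x i0) => //; rewrite x1 x2 mulr0 mulr1 mulrC.
Qed.

Lemma pt01_proj_neq c e : c != e -> ~ proj_eq (pt 0 1 c) (pt 0 1 e).
Proof. by move=> ce /proj_eq_pt01[_ _] /=; rewrite mulr1 => /esym/eqP; apply/negP. Qed.

Lemma pt10_proj_neq c e : c != e -> ~ proj_eq (pt 1 0 c) (pt 1 0 e).
Proof. by move=> ce /proj_eq_pt10[_ _] /=; rewrite mulr1 => /esym/eqP; apply/negP. Qed.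

End ProjectivePlane.

Section Curve.
Variable R : realType.
Local Notation C := R[i].
Variables v11 v12 v21 v22 d : C.
Local Notation A1 := (a1 v11 v12 v21 v22 d).
Local Notation A2 := (a2 v11 v12 v21 v22 d).
Local Notation A3 := (a3 v11 v12 v21 v22 d).
Local Notation A4 := (a4 v11 v12 v21 v22 d).
Local Notation P := (Ppoly v11 v12 v21 v22 d).
Local Notation V := (onV v11 v12 v21 v22 d).

Lemma Ppoly_quartic : P = quartic A1 A2 A3 A4 v12 v22 'X_i0 'X_i1 'X_i2.
Proof. by []. Qed.

Lemma Ppoly_ptE x y z : P.@[pt x y z] =
  A4 * z ^+ 4 + 2 * (v22 * x - v12 * y) * z ^+ 3 - (A3 * x ^+ 2 + A2 * y ^+ 2) * z ^+ 2
  + 2 * x * y * (v22 * y - v12 * x) * z + A1 * x ^+ 2 * y ^+ 2.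
Proof.
rewrite Ppoly_quartic.
by rewrite (morph_quartic _ _ _ _ _ _ (mevalD _) (mevalN _) (mevalM _) (mevalZ _)) !mevalXU.
Qed.

Lemma mderiv2_Ppoly_ptE x y z : (P^`M(i2)).@[pt x y z] =
  4 * A4 * z ^+ 3 + 6 * (v22 * x - v12 * y) * z ^+ 2 - 2 * (A3 * x ^+ 2 + A2 * y ^+ 2) * z
  + 2 * x * y * (v22 * y - v12 * x).
Proof.
rewrite Ppoly_quartic (morph_deriv_quartic _ _ _ _ _ _ (mevalD _) (mevalN _) (mevalM _)
  (mevalZ _) (mderivD _) (mderivN _) (mderivM _) (mderivZ _)) ?meval_mderivXU //.
by rewrite !mevalXU.
Qed.

Lemma onV_ptE x : V x <-> P.@[pt (x i0) (x i1) (x i2)] = 0.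
Proof.
by rewrite /onV (@meval_eq _ _ x (pt (x i0) (x i1) (x i2))) // => j; case: (ord3P j) => ->.
Qed.

Lemma onV_H0 (r r' : C) : A4 != 0 -> A4 * (r + r') = 2 * v12 -> A4 * (r * r') = - A2 ->
  forall x, nonzero3 x -> x i0 = 0 ->
  V x <-> [\/ proj_eq (pt 0 1 0) x, proj_eq (pt 0 1 r) x | proj_eq (pt 0 1 r') x].
Proof.
move=> A4_0 hsum hprod x /nonzero3P nz x0.
have yz : x i1 != 0 \/ x i2 != 0 by case: nz => [|?|?]; [rewrite x0 eqxx|left|right].
have factor : P.@[pt 0 (x i1) (x i2)] =
    A4 * (x i2 ^+ 2 * ((x i2 - r * x i1) * (x i2 - r' * x i1))).
  by rewrite Ppoly_ptE [RHS]mulrCA -(vieta_factor (x i1) (x i2) hsum hprod); ring.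
rewrite onV_ptE x0 factor; split=> [/eqP|].
  rewrite mulf_eq0 (negbTE A4_0) => /eqP /(binary_quartic_eq0 yz).
  by case=> -[x1 x2]; [apply: Or31|apply: Or32|apply: Or33]; apply/proj_eq_pt01.
by case=> /proj_eq_pt01[_ _ ->]; rewrite ?subrr ?mul0r ?expr0n /= ?mul0r ?mulr0.
Qed.

Lemma onV_H1 (s s' : C) : A4 != 0 -> A4 * (s + s') = 2 * - v22 -> A4 * (s * s') = - A3 ->
  forall x, nonzero3 x -> x i1 = 0 ->
  V x <-> [\/ proj_eq (pt 1 0 0) x, proj_eq (pt 1 0 s) x | proj_eq (pt 1 0 s') x].
Proof.
move=> A4_0 hsum hprod x /nonzero3P nz x1.
have yz : x i0 != 0 \/ x i2 != 0 by case: nz => [?||?]; [left|rewrite x1 eqxx|right].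
have factor : P.@[pt (x i0) 0 (x i2)] =
    A4 * (x i2 ^+ 2 * ((x i2 - s * x i0) * (x i2 - s' * x i0))).
  by rewrite Ppoly_ptE [RHS]mulrCA -(vieta_factor (x i0) (x i2) hsum hprod); ring.
rewrite onV_ptE x1 factor; split=> [/eqP|].
  rewrite mulf_eq0 (negbTE A4_0) => /eqP /(binary_quartic_eq0 yz).
  by case=> -[x0 x2]; [apply: Or31|apply: Or32|apply: Or33]; apply/proj_eq_pt10.
by case=> /proj_eq_pt10[_ _ ->]; rewrite ?subrr ?mul0r ?expr0n /= ?mul0r ?mulr0.
Qed.

Lemma onV_H2 : A1 != 0 -> forall x, nonzero3 x -> x i2 = 0 ->
  V x <-> proj_eq (pt 1 0 0) x \/ proj_eq (pt 0 1 0) x.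
Proof.
move=> A1_0 x /nonzero3P nz x2.
have factor : P.@[pt (x i0) (x i1) 0] = A1 * (x i0 ^+ 2 * x i1 ^+ 2).
  by rewrite Ppoly_ptE; ring.
rewrite onV_ptE x2 factor proj_eq_pt10 proj_eq_pt01 x2 !mul0r.
split=> [/eqP|[[-> _ _]|[-> _ _]]]; rewrite ?expr0n /= ?mul0r ?mulr0 //.
rewrite mulf_eq0 (negbTE A1_0) /= mulf_eq0 !expf_eq0 /= => /orP[]/eqP xE.
- by right; split=> //; case: nz; rewrite ?xE ?x2 ?eqxx.
- by left; split=> //; case: nz; rewrite ?xE ?x2 ?eqxx.
Qed.

Lemma smooth_pt01 (r r' : C) : A4 != 0 -> r != 0 -> r' != 0 -> r != r' ->
  A4 * (r + r') = 2 * v12 -> A4 * (r * r') = - A2 ->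
  smooth_pt v11 v12 v21 v22 d (pt 0 1 r) /\ smooth_pt v11 v12 v21 v22 d (pt 0 1 r').
Proof.
move=> A4_0 r0 r'0 rr' hsum hprod.
have [dr dr'] := vieta_quartic_deriv_neq0 A4_0 r0 r'0 rr' hsum hprod.
by split; exists i2; rewrite mderiv2_Ppoly_ptE; [move: dr|move: dr'];
  apply: contra_neq => <-; ring.
Qed.

Lemma smooth_pt10 (s s' : C) : A4 != 0 -> s != 0 -> s' != 0 -> s != s' ->
  A4 * (s + s') = 2 * - v22 -> A4 * (s * s') = - A3 ->
  smooth_pt v11 v12 v21 v22 d (pt 1 0 s) /\ smooth_pt v11 v12 v21 v22 d (pt 1 0 s').
Proof.
move=> A4_0 s0 s'0 ss' hsum hprod.
have [ds ds'] := vieta_quartic_deriv_neq0 A4_0 s0 s'0 ss' hsum hprod.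
by split; exists i2; rewrite mderiv2_Ppoly_ptE; [move: ds|move: ds'];
  apply: contra_neq => <-; ring.
Qed.

End Curve.

Theorem lemma6p4 (R : realType) (v11 v12 v21 v22 d : R[i]) :
  let A1 := a1 v11 v12 v21 v22 d in
  let A2 := a2 v11 v12 v21 v22 d in
  let A3 := a3 v11 v12 v21 v22 d in
  let A4 := a4 v11 v12 v21 v22 d in
  let V := onV v11 v12 v21 v22 d in
  A1 != 0 -> A2 != 0 -> A3 != 0 -> A4 != 0 ->
  v12 ^+ 2 + A2 * A4 != 0 -> v22 ^+ 2 + A3 * A4 != 0 ->
  exists r1 R1 r2 R2 s1 S1 s2 S2 : R[i],
  [/\
   (* (i) V ∩ H_0 *)
   [/\ [/\ r1 != 0, R1 != 0, r2 != 0 & R2 != 0],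
       A4 * R1 ^+ 2 - 2%:R * v12 * r1 * R1 - A2 * r1 ^+ 2 = 0,
       A4 * R2 ^+ 2 - 2%:R * v12 * r2 * R2 - A2 * r2 ^+ 2 = 0,
       [/\ ~ proj_eq (pt 0 1 0) (pt 0 r1 R1), ~ proj_eq (pt 0 1 0) (pt 0 r2 R2)
         & ~ proj_eq (pt 0 r1 R1) (pt 0 r2 R2)]
     & forall x : 'I_3 -> R[i], nonzero3 x -> x i0 = 0 ->
         (V x <-> [\/ proj_eq (pt 0 1 0) x, proj_eq (pt 0 r1 R1) x
                    | proj_eq (pt 0 r2 R2) x])],
   (* (ii) V ∩ H_1 *)
   [/\ [/\ s1 != 0, S1 != 0, s2 != 0 & S2 != 0],
       A4 * S1 ^+ 2 + 2%:R * v22 * s1 * S1 - A3 * s1 ^+ 2 = 0,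
       A4 * S2 ^+ 2 + 2%:R * v22 * s2 * S2 - A3 * s2 ^+ 2 = 0,
       [/\ ~ proj_eq (pt 1 0 0) (pt s1 0 S1), ~ proj_eq (pt 1 0 0) (pt s2 0 S2)
         & ~ proj_eq (pt s1 0 S1) (pt s2 0 S2)]
     & forall x : 'I_3 -> R[i], nonzero3 x -> x i1 = 0 ->
         (V x <-> [\/ proj_eq (pt 1 0 0) x, proj_eq (pt s1 0 S1) x
                    | proj_eq (pt s2 0 S2) x])],
   (* (iii) V ∩ H_2 *)
   (forall x : 'I_3 -> R[i], nonzero3 x -> x i2 = 0 ->
      (V x <-> proj_eq (pt 1 0 0) x \/ proj_eq (pt 0 1 0) x))
   &
   (* (iv) smoothness *)
   [/\ smooth_pt v11 v12 v21 v22 d (pt 0 r1 R1),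
       smooth_pt v11 v12 v21 v22 d (pt 0 r2 R2),
       smooth_pt v11 v12 v21 v22 d (pt s1 0 S1)
     & smooth_pt v11 v12 v21 v22 d (pt s2 0 S2)]].
Proof.
move=> A1 A2 A3 A4 V; rewrite {}/A1 {}/A2 {}/A3 {}/A4 {}/V.
move=> A1_0 A2_0 A3_0 A4_0 disc0 disc1.
have [r [r' [r0 r'0 rr' hr hr']]] := quadratic_vieta A4_0 A2_0 disc0.
have disc1' : (- v22) ^+ 2 + a3 v11 v12 v21 v22 d * a4 v11 v12 v21 v22 d != 0.
  by rewrite sqrrN.
have [s [s' [s0 s'0 ss' hs hs']]] := quadratic_vieta A4_0 A3_0 disc1'.
have [root_r root_r'] := vieta_roots hr hr'.
have [root_s root_s'] := vieta_roots hs hs'.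
have [smooth_r smooth_r'] := smooth_pt01 A4_0 r0 r'0 rr' hr hr'.
have [smooth_s smooth_s'] := smooth_pt10 A4_0 s0 s'0 ss' hs hs'.
exists 1, r, 1, r', 1, s, 1, s'; split; [split|split|exact: onV_H2 A1_0|by split].
- by rewrite oner_neq0.
- by rewrite -root_r; ring.
- by rewrite -root_r'; ring.
- by split; apply: pt01_proj_neq; rewrite // eq_sym.
- exact: onV_H0 A4_0 hr hr'.
- by rewrite oner_neq0.
- by rewrite -root_s; ring.
- by rewrite -root_s'; ring.
- by split; apply: pt10_proj_neq; rewrite // eq_sym.
- exact: onV_H1 A4_0 hs hs'.
Qed.
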